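(* Let $n=6k+2$ with $k\geq 2$ an integer, and let $\mathcal{U}_n$ be the latin square defined below. Then $\mathcal{U}_n$ has a transversal, and every suitable diagonal of $\mathcal{U}_n$ contains the $k$ entries $$(1,3,5),\ (3,4,8),\ \text{and}\ (3j+3,\ n-6j,\ n-3j+4)\ \text{for } j=1,\dots,k-2,$$ i.e. the entries $(1,3,5),(3,4,8),(6,n-6,1),(9,n-12,n-2),\ldots,(3k-3,14,3k+12)$ (all coordinates read modulo $n$).
   Context: Rows, columns and symbols are indexed by $\mathbb{Z}_n=\{0,1,\dots,n-1\}$; all arithmetic on symbols is modulo $n$, and congruence conditions on $a,b$ modulo $2$ or $3$ refer to the representatives in $\{0,\dots,n-1\}$. A latin square is viewed as its set of entries $(r,c,s)$ (symbol $s$ in row $r$, column $c$). For $n=6k+2$, $k\ge2$, the latin square $\mathcal{U}_n$ is defined by $\mathcal{U}_n[a,b]=$ $a+b+1$ if $(a,b)\in\{(1,3),(2,5),(3,4)\}$; $a+b-1$ if $(a,b)\in\{(1,4),(2,4),(3,5),(4,3),(4,4)\}$; $a+b+2$ if $(a,b)\in\{(0,4),(2,3)\}$; $a+b+2$ if $b\ne4$, $b\equiv0\pmod2$ and $a=2$; $a+b+3$ if ($b>3$, $b\equiv 0\pmod 3$ and $a=0$) or $(a,b)=(0,1)$; $a+b-3$ if ($b>3$, $b\equiv0\pmod3$ and $a=3$) or $(a,b)=(3,1)$; $a+b-2$ if ($b\neq4$, $b\equiv0\pmod2$ and $a=4$) or $(a,b)=(3,3)$; $a+b+2$ if $5\le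 a\le 3k-2$, $a\equiv2\pmod3$, $b\equiv0\pmod2$ and $b\ne n-2a+4$; $a+b+1$ if $5\le a\le 3k-2$, $a\equiv 2\pmod3$ and $b\in\{n-2a+4,n-2a+5\}$; $a+b+1$ if $5\le a\le 3k-2$, $a\equiv0\pmod 3$ and $b=n-2a+6$; $a+b-1$ if $5\le a\le 3k-2$, $a\equiv 0\pmod3$ and $b=n-2a+7$; $a+b-2$ if $5\le a\le 3k-2$, $a\equiv1\pmod3$ and $b\equiv0\pmod2$; $a+b$ otherwise. A transversal is a set of $n$ entries containing each row, column and symbol exactly once. For an entry $(r,c,s)$, $\Delta(r,c,s)$ is the unique integer with $\Delta(r,c,s)\equiv s-r-c\pmod n$ and $-n/2<\Delta(r,c,s)\le n/2$. A suitable diagonal is a set of $n$ entries, no two sharing a row or a column, whose $\Delta$-values sum to something congruent to $n/2$ modulo $n$. *)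

From mathcomp Require Import all_boot all_order all_algebra.
From mathcomp Require Import all_fingroup.
Set Implicit Arguments. Unset Strict Implicit. Unset Printing Implicit Defensive.
Import GRing.Theory Num.Theory.

(* The latin square U_n, n = 6k+2, as a function on representatives
   a, b in {0,...,n-1}; the result is the symbol's representative in
   {0,...,n-1}.  "a+b+d" is computed modulo n (negative d via adding n). *)
Definition Usym (k a b : nat) : nat :=
  let n := 6 * k + 2 in
  let p d := (a + b + d) %% n in
  let m d := (a + b + n - d) %% n in
  if (a, b) \in [:: (1,3); (2,5); (3,4)] then p 1
  else if (a, b) \in [:: (1,4); (2,4); (3,5); (4,3); (4,4)] then m 1
  else if (a, b) \in [:: (0,4); (2,3)] then p 2
  else if [&& b != 4, ~~ odd b & a == 2] then p 2
  else if [&& 3 < b, b %% 3 == 0 & a == 0] || ((a, b) == (0,1)) then p 3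
  else if [&& 3 < b, b %% 3 == 0 & a == 3] || ((a, b) == (3,1)) then m 3
  else if [&& b != 4, ~~ odd b & a == 4] || ((a, b) == (3,3)) then m 2
  else if [&& 5 <= a, a <= 3 * k - 2, a %% 3 == 2, ~~ odd b & b != n - 2 * a + 4]
    then p 2
  else if [&& 5 <= a, a <= 3 * k - 2, a %% 3 == 2 & ((b == n - 2 * a + 4) || (b == n - 2 * a + 5))]
    then p 1
  else if [&& 5 <= a, a <= 3 * k - 2, a %% 3 == 0 & b == n - 2 * a + 6] then p 1
  else if [&& 5 <= a, a <= 3 * k - 2, a %% 3 == 0 & b == n - 2 * a + 7] then m 1
  else if [&& 5 <= a, a <= 3 * k - 2, a %% 3 == 1 & ~~ odd b] then m 2
  else p 0.

Definition Delta (n r c s : nat) : int :=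
  let d := (s + 2 * n - r - c) %% n in
  if d <= n./2 then (d%:Z)%R else (d%:Z - n%:Z)%R.

(* A set of n entries with no two sharing a row or a column is exactly
   {(i, sigma i, U[i, sigma i]) | i} for a permutation sigma of the rows. *)
Definition diag_has_entry (k : nat) (s : 'S_(6 * k + 2)) (r c x : nat) : Prop :=
  exists i : 'I_(6 * k + 2),
    [/\ (i : nat) = r %% (6 * k + 2), (s i : nat) = c %% (6 * k + 2)
      & Usym k i (s i) = x %% (6 * k + 2)].

Definition U_transversal (k : nat) (s : 'S_(6 * k + 2)) : Prop :=
  injective (fun i : 'I_(6 * k + 2) => Usym k i (s i)).

Definition U_suitable (k : nat) (s : 'S_(6 * k + 2)) : Prop :=
  ((\sum_(i < 6 * k + 2) Delta (6 * k + 2) i (s i) (Usym k i (s i)))%R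
     = ((3 * k + 1)%:Z) %[mod (6 * k + 2)%:Z])%Z.

From mathcomp Require Import all_boot all_order all_algebra all_fingroup.
From mathcomp Require Import zify.
Set Implicit Arguments. Unset Strict Implicit. Unset Printing Implicit Defensive.
Import GRing.Theory Num.Theory.

(* Every entry of U_n is U_n[a,b] = a + b + d with a small shift d = Delta(a, b, U_n[a,b]),
   and in each row a the shift lies between two bounds row_min a <= d <= row_max a whose
   sums over all rows are -n/2 and n/2.  The Delta-sum of a suitable diagonal is therefore
   a number in [-n/2, n/2] congruent to n/2 modulo n, i.e. +-n/2, so the diagonal attains
   the lower bound in every row or the upper bound in every row.  The lower bound is attained
   in rows 1 and 2 only in column 4, which is impossible for a diagonal; the upper bound is
   attained in rows 1, 3 and 3j+3 only in columns 3, 4 and n-6j, which gives the stated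
   entries. *)

Lemma sum_nat_triples (V : nmodType) (F : nat -> V) a m c :
  (forall i, i < m -> let b := a + 3 * i in (F b + F b.+1 + F b.+2 = c)%R) ->
  (\sum_(a <= i < (a + 3 * m)%N) F i = c *+ m)%R.
Proof.
elim: m => [|m IH] Fc; first by rewrite addn0 big_geq.
rewrite (big_cat_nat _ (n := a + 3 * m)) ?IH; try lia; last by move=> i im; apply: Fc; lia.
rewrite /index_iota (_ : _ - _ = 3) /=; last by lia.
by rewrite !big_cons big_nil addr0 mulrSr -(Fc m) // !addrA.
Qed.

Lemma ler_sum_eq (R : numDomainType) (I : finType) (F G : I -> R) :
  (forall i, F i <= G i)%R -> (\sum_i F i = \sum_i G i)%R -> forall i, F i = G i.
Proof.
move=> FG sumFG i; apply/eqP; rewrite eq_sym -subr_eq0; apply/eqP.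
apply: (@psumr_eq0P _ _ xpredT (fun i => G i - F i)%R) => // [j _|].
  by rewrite subr_ge0.
by rewrite sumrB sumFG subrr.
Qed.

Lemma eqz_mod_double_bounded (m : nat) (x : int) :
  (- m%:Z <= x <= m%:Z)%R -> (x = m %[mod (2 * m)%:Z])%Z -> x = m \/ x = (- m%:Z)%R.
Proof.
move=> x_bd /eqP; rewrite eqz_mod_dvd => /dvdzP[q x_q].
case: (posnP m) x_bd => [-> | m_gt0] x_bd; first by left; lia.
have : (q = 0 \/ q = -1)%R by nia.
by case=> q_val; [left | right]; move: x_q; rewrite q_val; lia.
Qed.

Lemma eq_modn_small n x v : v < n -> x = v \/ x = v + n \/ x = v + 2 * n -> x %% n = v.
Proof.
move=> v_lt [-> | [-> | ->]]; first exact: modn_small.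
  by rewrite modnDr modn_small.
by rewrite addnC modnMDl modn_small.
Qed.

Lemma Delta_modn n r c x : r <= n -> c <= n -> Delta n r c (x %% n) = Delta n r c x.
Proof.
move=> rn cn; have E y : y + 2 * n - r - c = y + (2 * n - r - c) by lia.
by rewrite /Delta !E modnDml.
Qed.

Lemma Delta_addn n a b d : a < n -> b < n -> d <= n./2 ->
  Delta n a b ((a + b + d) %% n) = (d%:Z)%R.
Proof.
move=> an bn dn; rewrite Delta_modn /Delta; [|exact: ltnW..].
rewrite (_ : a + b + d + 2 * n - a - b = 2 * n + d); last by lia.
by rewrite modnMDl modn_small ?dn //; lia.
Qed.

Lemma Delta_subn n a b d : a < n -> b < n -> 0 < d < n./2 ->
  Delta n a b ((a + b + n - d) %% n) = (- d%:Z)%R.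
Proof.
move=> an bn dn; rewrite Delta_modn /Delta; [|exact: ltnW..].
rewrite (_ : a + b + n - d + 2 * n - a - b = 2 * n + (n - d)); last by lia.
rewrite modnMDl modn_small; last by lia.
by rewrite leqNgt (_ : n./2 < n - d) /=; lia.
Qed.

(* The shift [d] in the paper's definition [U_n[a,b] = a + b + d]; the conditions are
   literally those of [Usym]. *)
Definition Ushift (k a b : nat) : int :=
  let n := 6 * k + 2 in
  if (a, b) \in [:: (1,3); (2,5); (3,4)] then 1%Z
  else if (a, b) \in [:: (1,4); (2,4); (3,5); (4,3); (4,4)] then (-1)%Z
  else if (a, b) \in [:: (0,4); (2,3)] then 2%Z
  else if [&& b != 4, ~~ odd b & a == 2] then 2%Z
  else if [&& 3 < b, b %% 3 == 0 & a == 0] || ((a, b) == (0,1)) then 3%Z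
  else if [&& 3 < b, b %% 3 == 0 & a == 3] || ((a, b) == (3,1)) then (-3)%Z
  else if [&& b != 4, ~~ odd b & a == 4] || ((a, b) == (3,3)) then (-2)%Z
  else if [&& 5 <= a, a <= 3 * k - 2, a %% 3 == 2, ~~ odd b & b != n - 2 * a + 4]
    then 2%Z
  else if [&& 5 <= a, a <= 3 * k - 2, a %% 3 == 2 & ((b == n - 2 * a + 4) || (b == n - 2 * a + 5))]
    then 1%Z
  else if [&& 5 <= a, a <= 3 * k - 2, a %% 3 == 0 & b == n - 2 * a + 6] then 1%Z
  else if [&& 5 <= a, a <= 3 * k - 2, a %% 3 == 0 & b == n - 2 * a + 7] then (-1)%Z
  else if [&& 5 <= a, a <= 3 * k - 2, a %% 3 == 1 & ~~ odd b] then (-2)%Z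
  else 0%Z.

Lemma Delta_Usym k a b : 0 < k -> a < 6 * k + 2 -> b < 6 * k + 2 ->
  Delta (6 * k + 2) a b (Usym k a b) = Ushift k a b.
Proof.
move=> k_gt0 an bn; rewrite /Usym /Ushift; repeat case: ifP => _;
  first [rewrite Delta_addn // | rewrite Delta_subn //]; lia.
Qed.

Definition row_profile (top mid : seq int) (k a : nat) : int :=
  if a < 5 then (top`_a)%R
  else if a <= 3 * k - 2 then (mid`_(a %% 3))%R else 0%R.

Definition row_max : nat -> nat -> int :=
  row_profile [:: 3; 1; 2; 1; 0]%Z [:: 1; 0; 2]%Z.

Definition row_min : nat -> nat -> int :=
  row_profile [:: 0; -1; -1; -3; -2]%Z [:: -1; -2; 0]%Z.

Lemma sum_row_profile top mid k : 2 <= k ->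
  (\sum_(i < 6 * k + 2) row_profile top mid k i
     = \sum_(i < 5) top`_i + (\sum_(r < 3) mid`_r) *+ (k - 2))%R.
Proof.
move=> k_ge2.
have head : (\sum_(0 <= i < 5) row_profile top mid k i = \sum_(i < 5) top`_i)%R.
  by rewrite big_mkord; apply: eq_bigr => i _; rewrite /row_profile ltn_ord.
have middle : (\sum_(5 <= i < 5 + 3 * (k - 2)) row_profile top mid k i
                 = (\sum_(r < 3) mid`_r) *+ (k - 2))%R.
  apply: sum_nat_triples => i i_lt b.
  have mid_row j : 5 <= j <= 3 * k - 2 -> row_profile top mid k j = (mid`_(j %% 3))%R.
    by move=> j_mid; rewrite /row_profile ifF ?ifT //; lia.
  rewrite /b !mid_row; try lia.
  have -> : (5 + 3 * i) %% 3 = 2 by lia.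
  have -> : (5 + 3 * i).+1 %% 3 = 0 by lia.
  have -> : (5 + 3 * i).+2 %% 3 = 1 by lia.
  by rewrite !big_ord_recr big_ord0 /= add0r [RHS]addrC addrA.
have tail : (\sum_(5 + 3 * (k - 2) <= i < 6 * k + 2) row_profile top mid k i = 0)%R.
  rewrite big_nat_cond big1 // => j /andP[/andP[j_ge _] _].
  by rewrite /row_profile !ifF //; lia.
rewrite -(big_mkord (fun _ => true)) (big_cat_nat _ (n := 5)) //; last by lia.
rewrite (big_cat_nat _ (m := 5) (n := 5 + 3 * (k - 2))); try lia.
by rewrite head middle tail /= addr0.
Qed.

Lemma sum_row_max k : 2 <= k -> (\sum_(i < 6 * k + 2) row_max k i)%R = (3 * k + 1)%:Z%R.
Proof. by move=> k_ge2; rewrite sum_row_profile // !big_ord_recr !big_ord0 /=; lia. Qed.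

Lemma sum_row_min k : 2 <= k -> (\sum_(i < 6 * k + 2) row_min k i)%R = (- (3 * k + 1)%:Z)%R.
Proof. by move=> k_ge2; rewrite sum_row_profile // !big_ord_recr !big_ord0 /=; lia. Qed.

(* Turning [==] on nat into [eqn] lets [/=] decide the tests on concrete rows. *)
Lemma Ushift_bounds k a b : (row_min k a <= Ushift k a b <= row_max k a)%R.
Proof.
rewrite /row_min /row_max /row_profile /Ushift !inE !xpair_eqE.
case: a => [|[|[|[|[|a]]]]]; rewrite -!eqnE /= ?andbF ?orbF; try by repeat case: ifP.
case: ltnP => _ /=; last by repeat case: ifP.
have : a.+4.+1 %% 3 < 3 by rewrite ltn_mod.
by case: (a.+4.+1 %% 3) => [|[|[|//]]] _ /=; repeat case: ifP.
Qed.

Ltac unfold_shift_bounds :=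
  rewrite /row_max /row_min /row_profile /Ushift !inE !xpair_eqE /=.

Lemma Ushift_eq_row_max1 k b : Ushift k 1 b = row_max k 1 -> b = 3.
Proof. by unfold_shift_bounds; repeat case: ifP; lia. Qed.

Lemma Ushift_eq_row_max3 k b : Ushift k 3 b = row_max k 3 -> b = 4.
Proof. by unfold_shift_bounds; repeat case: ifP; lia. Qed.

Lemma Ushift_eq_row_min1 k b : Ushift k 1 b = row_min k 1 -> b = 4.
Proof. by unfold_shift_bounds; repeat case: ifP; lia. Qed.

Lemma Ushift_eq_row_min2 k b : Ushift k 2 b = row_min k 2 -> b = 4.
Proof. by unfold_shift_bounds; repeat case: ifP; lia. Qed.

Lemma Ushift_eq_row_max_mod0 k a b : 5 <= a <= 3 * k - 2 -> a %% 3 = 0 ->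
  Ushift k a b = row_max k a -> b = 6 * k + 8 - 2 * a.
Proof.
case: a => [|[|[|[|[|a]]]]] // a_le a3; unfold_shift_bounds.
rewrite -!eqnE /= a3 (_ : a.+4 < 3 * k - 2) /=; last by lia.
by rewrite !eqnE; repeat case: ifP; lia.
Qed.

Ltac reduce_ifs :=
  repeat match goal with
  | |- context [if ?c then _ else _] =>
      lazymatch c with
      | true => fail | false => fail
      | _ => first [rewrite (_ : c = true); last by lia | rewrite (_ : c = false); last by lia]
      end
  end; cbv beta iota zeta.

Lemma Usym_low_mod0 k a : 5 <= a <= 3 * k - 2 -> a %% 3 = 0 ->
  Usym k a (6 * k + 8 - 2 * a) = (6 * k + 9 - a) %% (6 * k + 2).
Proof.
move=> a_low a3; rewrite /Usym !inE !xpair_eqE; reduce_ifs.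
by congr (_ %% _); lia.
Qed.

Section SuitableDiagonal.

Variables (k : nat) (s : 'S_(6 * k + 2)).
Hypothesis k_ge2 : 2 <= k.

Lemma sum_Delta_diag :
  (\sum_(i < 6 * k + 2) Delta (6 * k + 2) i (s i) (Usym k i (s i))
     = \sum_(i < 6 * k + 2) Ushift k i (s i))%R.
Proof. by apply: eq_bigr => i _; rewrite Delta_Usym //; lia. Qed.

Lemma suitable_sum_Ushift : U_suitable s ->
  let S := (\sum_(i < 6 * k + 2) Ushift k i (s i))%R in
  S = (3 * k + 1)%:Z%R \/ S = (- (3 * k + 1)%:Z)%R.
Proof.
move=> S_mod S; rewrite /U_suitable sum_Delta_diag in S_mod.
apply: eqz_mod_double_bounded; last by rewrite (_ : 2 * (3 * k + 1) = 6 * k + 2); last lia.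
rewrite /S -sum_row_min // -sum_row_max //.
by apply/andP; split; apply: ler_sum => i _; case/andP: (Ushift_bounds k i (s i)).
Qed.

Lemma diag_not_row_min : ~ (forall i : 'I_(6 * k + 2), Ushift k i (s i) = row_min k i).
Proof.
move=> at_min; have [r1 r2] : 1 < 6 * k + 2 /\ 2 < 6 * k + 2 by lia.
have col1 := Ushift_eq_row_min1 (at_min (Ordinal r1)).
have col2 := Ushift_eq_row_min2 (at_min (Ordinal r2)).
suff: Ordinal r1 = Ordinal r2 by [].
by apply: (@perm_inj _ s); apply: val_inj; rewrite /= col1 col2.
Qed.

Lemma suitable_diag_row_max :
  U_suitable s -> forall i : 'I_(6 * k + 2), Ushift k i (s i) = row_max k i.
Proof.
have bounds (i : 'I_(6 * k + 2)) := andP (Ushift_bounds k i (s i)).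
case/suitable_sum_Ushift => [sum_max | sum_min].
  by apply: ler_sum_eq => [i | ]; [case: (bounds i) | rewrite sum_max sum_row_max].
exfalso; apply: diag_not_row_min => i; symmetry; move: i.
by apply: ler_sum_eq => [i | ]; [case: (bounds i) | rewrite sum_min sum_row_min].
Qed.

Lemma diag_has_entry_row (i : 'I_(6 * k + 2)) r c x :
  i = r :> nat -> s i = c :> nat -> Usym k r c = x %% (6 * k + 2) -> diag_has_entry s r c x.
Proof. by move=> <- <- sym_rc; exists i; rewrite !(modn_small (ltn_ord _)). Qed.

Lemma suitable_diag_entries : U_suitable s ->
  [/\ diag_has_entry s 1 3 5,
      diag_has_entry s 3 4 8
    & forall j : nat, 1 <= j <= k - 2 ->
        diag_has_entry s (3 * j + 3) (6 * k + 2 - 6 * j) (6 * k + 2 - 3 * j + 4)].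
Proof.
move=> /suitable_diag_row_max at_max.
have [r1 r3] : 1 < 6 * k + 2 /\ 3 < 6 * k + 2 by lia.
split.
- apply: (diag_has_entry_row (i := Ordinal r1)) => //.
  exact: Ushift_eq_row_max1 (at_max (Ordinal r1)).
- apply: (diag_has_entry_row (i := Ordinal r3)) => //.
  exact: Ushift_eq_row_max3 (at_max (Ordinal r3)).
move=> j j_range; have rj : 3 * j + 3 < 6 * k + 2 by lia.
have col : 6 * k + 2 - 6 * j = 6 * k + 8 - 2 * (3 * j + 3) by lia.
apply: (diag_has_entry_row (i := Ordinal rj)) => //.
  by rewrite col; apply: Ushift_eq_row_max_mod0 (at_max (Ordinal rj)) => /=; lia.
by rewrite col Usym_low_mod0; [congr (_ %% _) | ..]; lia.
Qed.

End SuitableDiagonal.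

Definition transversal_col (k a : nat) : nat :=
  if a == 0 then 1 else if a == 1 then 3 else if a == 2 then 6 * k
  else if a == 3 then 4 else if a == 4 then 6 * k + 1
  else if a <= 3 * k - 2 then
    (if a %% 3 == 2 then 6 * k + 4 - 2 * a
     else if a %% 3 == 0 then 6 * k + 8 - 2 * a else 6 * k + 9 - 2 * a)
  else if a == 3 * k - 1 then 8 else if a == 3 * k then 9
  else if a == 3 * k + 1 then 5 else if a == 3 * k + 2 then 6
  else if a == 3 * k + 3 then 2 else if a == 3 * k + 4 then 0
  else if a <= 6 * k - 2 then
    (if a %% 3 == 2 then 12 * k + 8 - 2 * a else 12 * k + 11 - 2 * a)
  else if a == 6 * k - 1 then 10 else if a == 6 * k then 11 else 7.

(* [transversal_cell k a b x]: the transversal takes column [b] and symbol [x] in row [a].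
   In the [_wrap] cells the sum [a + b + d] exceeds [n] and the symbol wraps around. *)
Inductive transversal_cell (k : nat) : nat -> nat -> nat -> Prop :=
  | cell0 : transversal_cell k 0 1 4
  | cell1 : transversal_cell k 1 3 5
  | cell2 : transversal_cell k 2 (6 * k) 2
  | cell3 : transversal_cell k 3 4 8
  | cell4 : transversal_cell k 4 (6 * k + 1) 3
  | cell_low2 a : 5 <= a <= 3 * k - 2 -> a %% 3 = 2 ->
      transversal_cell k a (6 * k + 4 - 2 * a) (6 * k + 6 - a)
  | cell6_wrap : 3 <= k -> transversal_cell k 6 (6 * k - 4) 1
  | cell_low0 a : 9 <= a <= 3 * k - 2 -> a %% 3 = 0 ->
      transversal_cell k a (6 * k + 8 - 2 * a) (6 * k + 9 - a)
  | cell7_wrap : 3 <= k -> transversal_cell k 7 (6 * k - 5) 0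
  | cell_low1 a : 10 <= a <= 3 * k - 2 -> a %% 3 = 1 ->
      transversal_cell k a (6 * k + 9 - 2 * a) (6 * k + 9 - a)
  | cell_3km1 : transversal_cell k (3 * k - 1) 8 (3 * k + 7)
  | cell_3k : 3 <= k -> transversal_cell k (3 * k) 9 (3 * k + 9)
  | cell_3k_wrap : k = 2 -> transversal_cell k (3 * k) 9 1
  | cell_3kp1 : transversal_cell k (3 * k + 1) 5 (3 * k + 6)
  | cell_3kp2 : 3 <= k -> transversal_cell k (3 * k + 2) 6 (3 * k + 8)
  | cell_3kp2_wrap : k = 2 -> transversal_cell k (3 * k + 2) 6 0
  | cell_3kp3 : transversal_cell k (3 * k + 3) 2 (3 * k + 5)
  | cell_3kp4 : transversal_cell k (3 * k + 4) 0 (3 * k + 4)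
  | cell_high2 a : 3 * k + 5 <= a <= 6 * k - 2 -> a %% 3 = 2 ->
      transversal_cell k a (12 * k + 8 - 2 * a) (6 * k + 6 - a)
  | cell_high a : 3 * k + 5 <= a <= 6 * k - 2 -> a %% 3 != 2 ->
      transversal_cell k a (12 * k + 11 - 2 * a) (6 * k + 9 - a)
  | cell_6km1 : transversal_cell k (6 * k - 1) 10 7
  | cell_6k : transversal_cell k (6 * k) 11 9
  | cell_6kp1 : transversal_cell k (6 * k + 1) 7 6.

Lemma transversal_cell_col_lt k a b x : 2 <= k -> transversal_cell k a b x -> b < 6 * k + 2.
Proof. by move=> k_ge2; case; lia. Qed.

Lemma transversal_cell_inj k a a' b b' x x' : 2 <= k ->
  transversal_cell k a b x -> transversal_cell k a' b' x' -> b = b' \/ x = x' -> a = a'.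
Proof. by move=> k_ge2 cell cell'; case: cell; case: cell'; lia. Qed.

Lemma transversal_col_cell_eq k a b x :
  transversal_cell k a b x -> transversal_col k a = b -> Usym k a b = x ->
  transversal_cell k a (transversal_col k a) (Usym k a (transversal_col k a)).
Proof. by move=> cell -> ->. Qed.

Ltac by_cell c :=
  eapply transversal_col_cell_eq;
  [ apply: c; lia
  | rewrite /transversal_col; reduce_ifs; lia
  | rewrite /Usym !inE !xpair_eqE; reduce_ifs; apply: eq_modn_small; lia ].

Lemma transversal_col_cell k a : 2 <= k -> a < 6 * k + 2 ->
  transversal_cell k a (transversal_col k a) (Usym k a (transversal_col k a)).
Proof.
move=> k_ge2 a_lt.
have [a_le4 | a_ge5] := leqP a 4.
  have : a = 0 \/ a = 1 \/ a = 2 \/ a = 3 \/ a = 4 by lia.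
  by case=> [->|[->|[->|[->|->]]]];
    [by_cell cell0 | by_cell cell1 | by_cell cell2 | by_cell cell3 | by_cell cell4].
have [a_low | a_gt] := leqP a (3 * k - 2).
  have : a %% 3 = 2 \/ a = 6 \/ a %% 3 = 0 /\ 9 <= a \/ a = 7 \/ a %% 3 = 1 /\ 10 <= a by lia.
  by case=> [a3 | [-> | [[a3 a9] | [-> | [a3 a10]]]]];
    [by_cell cell_low2 | by_cell cell6_wrap | by_cell cell_low0 | by_cell cell7_wrap
    | by_cell cell_low1].
have [a_mid | a_high] := leqP a (3 * k + 4).
  have : a = 3 * k - 1 \/ a = 3 * k \/ a = 3 * k + 1 \/ a = 3 * k + 2 \/ a = 3 * k + 3
         \/ a = 3 * k + 4 by lia.
  have [k2 | k3] : k = 2 \/ 3 <= k by lia.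
    by case=> [-> | [-> | [-> | [-> | [-> | ->]]]]];
      [by_cell cell_3km1 | by_cell cell_3k_wrap | by_cell cell_3kp1 | by_cell cell_3kp2_wrap
      | by_cell cell_3kp3 | by_cell cell_3kp4].
  by case=> [-> | [-> | [-> | [-> | [-> | ->]]]]];
    [by_cell cell_3km1 | by_cell cell_3k | by_cell cell_3kp1 | by_cell cell_3kp2
    | by_cell cell_3kp3 | by_cell cell_3kp4].
have [a_high' | a_top] := leqP a (6 * k - 2).
  by have [a3 | a3] := eqVneq (a %% 3) 2; [by_cell cell_high2 | by_cell cell_high].
have : a = 6 * k - 1 \/ a = 6 * k \/ a = 6 * k + 1 by lia.
by case=> [-> | [-> | ->]]; [by_cell cell_6km1 | by_cell cell_6k | by_cell cell_6kp1].
Qed.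

Lemma U_transversal_exists k : 2 <= k -> exists s : 'S_(6 * k + 2), U_transversal s.
Proof.
move=> k_ge2; have cell (i : 'I_(6 * k + 2)) := transversal_col_cell k_ge2 (ltn_ord i).
pose col i := Ordinal (transversal_cell_col_lt k_ge2 (cell i)).
have col_inj : injective col.
  move=> i j /(congr1 val) same_col; apply: val_inj.
  exact: transversal_cell_inj k_ge2 (cell i) (cell j) (or_introl same_col).
exists (perm col_inj) => i j; rewrite /= !permE => same_sym; apply: val_inj.
exact: transversal_cell_inj k_ge2 (cell i) (cell j) (or_intror same_sym).
Qed.

Theorem lemma8 (k : nat) : 2 <= k ->
  (exists s : 'S_(6 * k + 2), U_transversal s) /\
  (forall s : 'S_(6 * k + 2), U_suitable s ->
     [/\ diag_has_entry s 1 3 5,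
         diag_has_entry s 3 4 8
       & forall j : nat, 1 <= j <= k - 2 ->
           diag_has_entry s (3 * j + 3) (6 * k + 2 - 6 * j) (6 * k + 2 - 3 * j + 4)]).
Proof.
move=> k_ge2; split; first exact: U_transversal_exists.
by move=> s; apply: suitable_diag_entries.
Qed.
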